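(* Let $j\in\mathbb{N}$ and $r\in\mathbb{N}_0$. Then for all $n\in\mathbb{N}$, \[c_j^{(r)}(n)=\sum_{i=0}^{j}(-1)^{j-i}\binom{j}{i} d_{i+r}(n).\]
   Context: $\mathbb{N}=\{1,2,\dots\}$, $\mathbb{N}_0=\mathbb{N}\cup\{0\}$. For $j,n\in\mathbb{N}$, $d_j(n)$ is the number of ordered $j$-tuples of positive integers with product $n$; $d_0(n)=1$ if $n=1$, $d_0(n)=0$ otherwise. $c_j(n)$ is the number of ordered $j$-tuples of integers each $\ge 2$ with product $n$. The associated divisor functions are defined recursively by $c_j^{(0)}=c_j$ and $c_j^{(r)}(n)=\sum_{m\mid n}c_j^{(r-1)}(m)$ for $r,n\in\mathbb{N}$. *)

From mathcomp Require Import all_boot all_order all_algebra.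
Set Implicit Arguments. Unset Strict Implicit. Unset Printing Implicit Defensive.

(* A tuple is a finite function 'I_j -> 'I_(n.+1); entries are bounded by n,
   which loses nothing since a positive divisor of n >= 1 is <= n (and for
   n = 0 there is no tuple of positive integers with product 0).
   For j = 0 the empty tuple has product 1, so d_0(n) = [n == 1]. *)
Definition dfun (j n : nat) : nat :=
  #|[set f : {ffun 'I_j -> 'I_n.+1} |
      [forall k, 0 < (f k : nat)] && (\prod_(k < j) (f k : nat) == n)]|.

Definition cfun (j n : nat) : nat :=
  #|[set f : {ffun 'I_j -> 'I_n.+1} |
      [forall k, 1 < (f k : nat)] && (\prod_(k < j) (f k : nat) == n)]|.

Fixpoint cassoc (j r n : nat) : nat :=
  match r with
  | 0 => cfun j n
  | r'.+1 => \sum_(m <- divisors n) cassoc j r' m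
  end.

From mathcomp Require Import all_boot all_order all_algebra.
Set Implicit Arguments. Unset Strict Implicit. Unset Printing Implicit Defensive.
Import GRing.Theory.

(* Splitting a tuple of product n into its first entry and its tail, whose
   product m divides n, gives d_{j+1}(n) = sum_{m | n} d_j(m); for tuples of
   entries >= 2 the first entry n/m is admissible exactly when m <> n, so
   c_{j+1}(n) + c_j(n) = sum_{m | n} c_j(m). Summing over divisors r times,
   c_0^{(r)} = d_r and c_{j+1}^{(r)} = c_j^{(r+1)} - c_j^{(r)}: thus c_j^{(r)}(n)
   is the j-th forward difference of i |-> d_i(n) at r, which expands
   binomially. *)

Section FfunCons.
Variable T : finType.

Definition ffun_cons j (x : T) (g : {ffun 'I_j -> T}) : {ffun 'I_j.+1 -> T} :=
  [ffun k => if unlift ord0 k is Some k' then g k' else x].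

Lemma ffun_cons0 j x g : @ffun_cons j x g ord0 = x.
Proof. by rewrite ffunE unlift_none. Qed.

Lemma ffun_consS j x g k : @ffun_cons j x g (lift ord0 k) = g k.
Proof. by rewrite ffunE liftK. Qed.

Lemma big_ffunS (R : Type) (idx : R) (op : Monoid.com_law idx) j
    (F : {ffun 'I_j.+1 -> T} -> R) :
  \big[op/idx]_f F f
    = \big[op/idx]_x \big[op/idx]_(g : {ffun 'I_j -> T}) F (ffun_cons x g).
Proof.
rewrite pair_big /= (reindex (fun p => ffun_cons p.1 p.2)) //.
exists (fun f : {ffun 'I_j.+1 -> T} => (f ord0, [ffun k => f (lift ord0 k)])).
  move=> [x g] _ /=.
  by rewrite ffun_cons0; congr pair; apply/ffunP => k; rewrite ffunE ffun_consS.
by move=> f _; apply/ffunP => k; rewrite ffunE; case: unliftP => [k'|] ->; rewrite ?ffunE.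
Qed.

Lemma big_ord_ffun_cons (R : Type) (idx : R) (op : Monoid.law idx) j x g
    (F : T -> R) :
  \big[op/idx]_(k < j.+1) F (ffun_cons x g k) = op (F x) (\big[op/idx]_(k < j) F (g k)).
Proof.
rewrite big_ord_recl ffun_cons0; congr (op _ _).
by apply: eq_bigr => k _; rewrite ffun_consS.
Qed.

Lemma forall_ffun_cons (P : pred T) j x (g : {ffun 'I_j -> T}) :
  [forall k, P (ffun_cons x g k)] = P x && [forall k, P (g k)].
Proof.
apply/forallP/andP => [Pxg | [Px /forallP Pg] k].
  split; first by have := Pxg ord0; rewrite ffun_cons0.
  by apply/forallP => k; have := Pxg (lift ord0 k); rewrite ffun_consS.
by case: (unliftP ord0 k) => [k'|] ->; rewrite ?ffun_cons0 ?ffun_consS.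
Qed.

End FfunCons.

Lemma perm_divisors_divn n :
  0 < n -> perm_eq (divisors n) [seq n %/ d | d <- divisors n].
Proof.
move=> n_gt0.
have divn_divisors d : d \in divisors n -> n %/ d \in divisors n.
  by rewrite -!dvdn_divisors //; apply: dvdn_div.
have divnK_divisors d : d \in divisors n -> n %/ (n %/ d) = d.
  by rewrite -dvdn_divisors // => /divnA ->; rewrite mulKn.
apply: uniq_perm; rewrite ?divisors_uniq //.
  rewrite map_inj_in_uniq ?divisors_uniq // => d e d_n e_n.
  by rewrite -{2}(divnK_divisors d d_n) -{2}(divnK_divisors e e_n) => ->.
move=> d; apply/idP/mapP => [d_n | [e /divn_divisors e_n -> //]].
by exists (n %/ d); rewrite ?divn_divisors ?divnK_divisors.
Qed.

Section BigDivisors.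
Variables (R : Type) (idx : R) (op : Monoid.com_law idx).

Lemma big_divisors_divn n (P : pred nat) (F : nat -> R) : 0 < n ->
  \big[op/idx]_(d <- divisors n | P d) F (n %/ d)
    = \big[op/idx]_(d <- divisors n | P (n %/ d)) F d.
Proof.
move=> n_gt0; rewrite [RHS](perm_big _ (perm_divisors_divn n_gt0)) big_map.
rewrite big_seq_cond [RHS]big_seq_cond; apply: eq_bigl => d.
by case: (boolP (d \in _)) => //; rewrite -dvdn_divisors // => /divnA ->; rewrite mulKn.
Qed.

Lemma big_ord_divisors B n (F : nat -> R) : 0 < n -> n <= B ->
  \big[op/idx]_(x < B.+1 | x %| n) F x = \big[op/idx]_(x <- divisors n) F x.
Proof.
move=> n_gt0 le_nB; rewrite -(big_mkord (fun x => x %| n)) -big_filter.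
apply: perm_big; apply: uniq_perm; rewrite ?filter_uniq ?iota_uniq ?divisors_uniq //.
move=> d; rewrite mem_filter mem_iota -dvdn_divisors //.
by case: (boolP (d %| n)) => //= /(dvdn_leq n_gt0) le_dn; apply: leq_trans le_nB.
Qed.

End BigDivisors.

Lemma eqn_mul_divn x p n : 0 < x -> (x * p == n) = (x %| n) && (p == n %/ x).
Proof.
move=> x_gt0; apply/eqP/andP => [<- | [/dvdnP [q ->] /eqP ->]].
  by rewrite dvdn_mulr // mulKn.
by rewrite mulnK // mulnC.
Qed.

Section PositiveTuples.
Variable P : pred nat.
Hypothesis P_gt0 : forall x, P x -> 0 < x.

Definition card_ptuples j B n :=
  #|[set f : {ffun 'I_j -> 'I_B.+1} |
      [forall k, P (f k)] && (\prod_(k < j) (f k : nat) == n)]|.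

(* [m] is the product of the last [j'] entries, the first entry being [n %/ m]. *)
Fixpoint count_ptuples j n :=
  if j is j'.+1 then \sum_(m <- divisors n | P (n %/ m)) count_ptuples j' m
  else (n == 1 : nat).

Lemma card_ptuplesS j B n : 0 < n -> n <= B ->
  card_ptuples j.+1 B n = \sum_(x <- divisors n | P x) card_ptuples j B (n %/ x).
Proof.
move=> n_gt0 le_nB.
rewrite big_mkcond -(big_ord_divisors _ _ n_gt0 le_nB) big_mkcond /=.
rewrite /card_ptuples -sum1dep_card big_mkcond big_ffunS; apply: eq_bigr => x _.
under eq_bigr do rewrite (forall_ffun_cons (fun y : 'I_B.+1 => P y)) big_ord_ffun_cons.
have [Px | nPx] /= := boolP (P x); last by rewrite if_same big1.
rewrite -sum1dep_card; case: (boolP (x %| n)) => [x_n | nx_n] /=.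
  by rewrite [RHS]big_mkcond; apply: eq_bigr => g _; rewrite eqn_mul_divn ?P_gt0 // x_n.
by rewrite big1 // => g _; rewrite eqn_mul_divn ?P_gt0 // (negbTE nx_n) andbF.
Qed.

Lemma card_ptuplesE j B n : 0 < n -> n <= B -> card_ptuples j B n = count_ptuples j n.
Proof.
elim: j n => [|j IHj] n n_gt0 le_nB.
  rewrite /card_ptuples -sum1dep_card big_mkcond.
  rewrite (eq_bigr (fun=> (n == 1 : nat))); last first.
    by move=> f _; rewrite big_ord0 eq_sym; case: forallP => // -[] [].
  by rewrite sum_nat_const card_ffun !card_ord expn0 mul1n.
rewrite card_ptuplesS //.
transitivity (\sum_(x <- divisors n | P x) count_ptuples j (n %/ x)).
  rewrite big_seq_cond [RHS]big_seq_cond; apply: eq_bigr => x /andP[x_n Px].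
  have x_dvd : x %| n by rewrite dvdn_divisors.
  apply: (IHj _ _ (leq_trans (leq_div n x) le_nB)).
  by rewrite divn_gt0 ?(P_gt0 Px) //; apply: dvdn_leq.
exact: big_divisors_divn.
Qed.

End PositiveTuples.

Lemma dfunE j n : 0 < n -> dfun j n = count_ptuples (fun x => 0 < x) j n.
Proof. by move=> n_gt0; apply: card_ptuplesE. Qed.

Lemma cfunE j n : 0 < n -> cfun j n = count_ptuples (fun x => 1 < x) j n.
Proof. by move=> n_gt0; apply: card_ptuplesE => // x /ltnW. Qed.

Lemma sum_divisors_dfun j n : 0 < n -> \sum_(m <- divisors n) dfun j m = dfun j.+1 n.
Proof.
move=> n_gt0; rewrite dfunE //= big_seq_cond [RHS]big_seq_cond.
apply: eq_big => [m | m]; rewrite -dvdn_divisors //.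
  by case: (boolP (m %| n)) => //= m_n; rewrite divn_gt0 (dvdn_gt0 n_gt0, dvdn_leq).
by case/andP=> m_n _; rewrite dfunE // (dvdn_gt0 n_gt0).
Qed.

Lemma sum_divisors_cfun j n : 0 < n ->
  \sum_(m <- divisors n) cfun j m = cfun j.+1 n + cfun j n.
Proof.
move=> n_gt0; rewrite (bigD1_seq n) ?divisors_id ?divisors_uniq //.
rewrite addnC (cfunE j.+1) //=.
congr (_ + _); rewrite big_seq_cond [RHS]big_seq_cond.
apply: eq_big => [m | m]; rewrite -dvdn_divisors //.
  case: (boolP (m %| n)) => //= m_n.
  by rewrite ltn_divRL // mul1n ltn_neqAle dvdn_leq // andbT.
by case/andP=> m_n _; rewrite cfunE // (dvdn_gt0 n_gt0).
Qed.

Lemma cassoc0 r n : 0 < n -> cassoc 0 r n = dfun r n.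
Proof.
elim: r n => [|r IHr] n n_gt0 /=; first by rewrite cfunE ?dfunE.
rewrite -sum_divisors_dfun // big_seq [RHS]big_seq; apply: eq_bigr => m m_n.
by rewrite IHr // (dvdn_gt0 n_gt0) ?dvdn_divisors.
Qed.

Lemma cassocS j r n : 0 < n -> cassoc j.+1 r n + cassoc j r n = cassoc j r.+1 n.
Proof.
elim: r n => [|r IHr] n n_gt0 /=; first by rewrite sum_divisors_cfun.
rewrite -big_split big_seq [RHS]big_seq; apply: eq_bigr => m m_n /=.
by rewrite IHr // (dvdn_gt0 n_gt0) ?dvdn_divisors.
Qed.

Local Open Scope ring_scope.

Section ForwardDifference.
Variable R : pzRingType.

Fixpoint fdiff (a : nat -> R) j r : R :=
  if j is j'.+1 then fdiff a j' r.+1 - fdiff a j' r else a r.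

Lemma fdiffE a j r :
  fdiff a j r = \sum_(i < j.+1) (-1) ^+ (j - i) * 'C(j, i)%:R * a (i + r)%N.
Proof.
elim: j r => [|j IHj] r /=.
  by rewrite big_ord1 /= subnn bin0 expr0 !mul1r.
rewrite big_ord_recl subn0 bin0.
under eq_bigr do rewrite lift0 subSS binS addnC natrD mulrDr mulrDl.
rewrite big_split /= !IHj addrCA; congr (_ + _).
  by apply: eq_bigr => i _; rewrite addSnnS.
have -> : \sum_(i < j.+1) (-1) ^+ (j - i) * 'C(j, i.+1)%:R * a (i.+1 + r)%N
        = \sum_(i < j) (-1) ^+ (j - i) * 'C(j, i.+1)%:R * a (i.+1 + r)%N.
  by rewrite big_ord_recr /= bin_small // mulr0n mulr0 mul0r addr0.
rewrite big_ord_recl subn0 bin0 opprD exprS mulN1r !mulNr add0n; congr (_ + _).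
rewrite -sumrN; apply: eq_bigr => i _.
by rewrite lift0 -(subnSK (ltn_ord i)) exprS mulN1r !mulNr.
Qed.

End ForwardDifference.

Lemma cassoc_fdiff j r n :
  (0 < n)%N -> (cassoc j r n)%:Z = fdiff (fun i => (dfun i n)%:Z) j r.
Proof.
move=> n_gt0; elim: j r => [|j IHj] r /=; first by rewrite cassoc0.
by rewrite -!IHj -cassocS // PoszD addrK.
Qed.

(* The identity also holds for [j = 0]. *)
Theorem lemma11 (j r n : nat) (hj : (0 < j)%N) (hn : (0 < n)%N) :
  (cassoc j r n)%:Z =
  \sum_(i < j.+1) (-1) ^+ (j - i) * ('C(j, i))%:Z * (dfun (i + r) n)%:Z.
Proof. by rewrite cassoc_fdiff // fdiffE; under eq_bigr do rewrite natz. Qed.
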